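(* Let $\mathcal G'_3$, $\tau$, $\mathcal G'_6$ and $\mathcal B$ be as in the context. There is a first-order sentence $\psi$ in the signature $\Gamma_6\cup\{<\}$ which is $(\mathcal G'_6,\mathcal B)$-invariant and such that for every $(G,x,y,z)\in\mathcal G'_3$: if $x,y,z$ lie in one connected component and $d(x,y)=d(x,z)$, then $G^\tau\models(\mathfrak B<)\psi$; if $x,y,z$ do not all lie in one connected component, or $|d(x,y)-d(x,z)|\ge 2$, then $G^\tau\models\neg(\mathfrak B<)\psi$.
   Context: Graphs are finite and undirected; $d$ denotes graph distance. A linear order $<$ of the vertex set of a graph, listing vertices $v_1<\dots<v_n$, is a breadth-first traversal (BFT) if for each $i\ge2$, whenever some $v_j$ with $j<i$ has a neighbour outside $\{v_1,\dots,v_{i-1}\}$, $v_i$ is adjacent to $v_{j^*}$ for the least such $j^*$ (i.e. $<$ is a visiting order of breadth-first search). Equivalently: for all $u<v<w$, $uEw$ implies some $x<v$ with $x\le u$ has $xEv$. $\Gamma_n$ is the signature with a binary relation symbol $E$ and $n$ constant symbols; an $n$-pointed graph is a graph with $n$ distinguished vertices. $\mathcal G'_3$ is the family of finite 3-pointed graphs $(G,x,y,z)$ such that, if $x,y,z$ lie in the same connected component, then $|d(x,y)-d(x,z)|\neq 1$. For a 3-pointed graph $(G,x,y,z)$, $G^\tau$ is the 6-pointed graph obtained from two disjoint copies $G_1,G_2$ of $G$ (each with edges inherited from $G$) by adding a single edge between $x_1$ and $x_2$, where $x_i,y_i,z_i$ denote the copies of $x,y,z$ in $G_i$; its constants are $x_1,y_1,z_1,x_2,y_2,z_2$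 (this is given by a 2-dimensional quantifier-free interpretation $\tau:\Gamma_6\to\Gamma_3$). $\mathcal G'_6=\{G^\tau: G\in\mathcal G'_3\}$, and $\mathcal B$ is the family of all expansions $(H,<)$ with $H\in\mathcal G'_6$ and $<$ a BFT of $H$. A $\Gamma_6\cup\{<\}$-sentence $\psi$ is $(\mathcal G'_6,\mathcal B)$-invariant if $(H,<)\models\psi\iff(H',<')\models\psi$ for all $(H,<),(H',<')\in\mathcal B$ with $H\cong H'$. For such $\psi$ and $H\in\mathcal G'_6$, $H\models(\mathfrak B<)\psi$ means $(H,<)\models\psi$ for some (equivalently every) BFT $<$ of $H$. *)

From mathcomp Require Import all_boot.
Set Implicit Arguments.
Unset Strict Implicit.
Unset Printing Implicit Defensive.

(* Finite graphs: a finType V with a symmetric irreflexive relation E. *)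

Definition walk (V : finType) (E : rel V) (u v : V) (k : nat) : Prop :=
  exists s : seq V, size s = k /\ path E u s /\ last u s = v.

(* d(u,v) = k  (only defined when u and v are connected) *)
Definition is_dist (V : finType) (E : rel V) (u v : V) (k : nat) : Prop :=
  walk E u v k /\ forall m, walk E u v m -> k <= m.

Definition same_comp3 (V : finType) (E : rel V) (x y z : V) : Prop :=
  connect E x y /\ connect E x z.

Definition inG3' (V : finType) (E : rel V) (x y z : V) : Prop :=
  same_comp3 E x y z ->
  forall k1 k2, is_dist E x y k1 -> is_dist E x z k2 ->
    k1 <> k2.+1 /\ k2 <> k1.+1.

Definition dist_gap2 (V : finType) (E : rel V) (x y z : V) : Prop :=
  exists k1 k2, is_dist E x y k1 /\ is_dist E x z k2 /\
                (k1 + 2 <= k2 \/ k2 + 2 <= k1).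

Definition dist_eq (V : finType) (E : rel V) (x y z : V) : Prop :=
  exists k, is_dist E x y k /\ is_dist E x z k.

Definition tauE (V : finType) (E : rel V) (x : V) : rel (V + V)%type :=
  fun a b =>
    match a, b with
    | inl a, inl b => E a b
    | inr a, inr b => E a b
    | inl a, inr b => (a == x) && (b == x)
    | inr a, inl b => (a == x) && (b == x)
    end.

Definition tauC (V : finType) (x y z : V) (i : 'I_6) : (V + V)%type :=
  match val i with
  | 0 => inl x | 1 => inl y | 2 => inl z
  | 3 => inr x | 4 => inr y | _ => inr z
  end.

Definition iso6 (V1 : finType) (E1 : rel V1) (c1 : 'I_6 -> V1)
                (V2 : finType) (E2 : rel V2) (c2 : 'I_6 -> V2) : Prop :=
  exists f : V1 -> V2, bijective f /\
    (forall a b, E2 (f a) (f b) = E1 a b) /\ (forall i, f (c1 i) = c2 i).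

Definition strict_linear (V : finType) (lt : rel V) : Prop :=
  irreflexive lt /\ transitive lt /\ (forall a b, a != b -> lt a b || lt b a).

Definition has_out_nbr (V : finType) (E : rel V) (lt : rel V) (j v : V) : Prop :=
  exists w, E j w /\ ~~ lt w v.

Definition BFT (V : finType) (E : rel V) (lt : rel V) : Prop :=
  strict_linear lt /\
  forall v jstar, lt jstar v -> has_out_nbr E lt jstar v ->
    (forall j, lt j jstar -> ~ has_out_nbr E lt j v) ->
    E jstar v.

(* First-order logic over Gamma_6 u {<}, de Bruijn variables.         *)

Inductive term : Type :=
| TVar of nat
| TConst of 'I_6.

Inductive formula : Type :=
| FEq of term & term
| FE of term & term
| FLt of term & term
| FNot of formula
| FAnd of formula & formula
| FOr of formula & formula
| FEx of formula
| FAll of formula.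

Definition term_wf (k : nat) (t : term) : bool :=
  match t with TVar n => n < k | TConst _ => true end.

Fixpoint formula_wf (k : nat) (f : formula) : bool :=
  match f with
  | FEq s t | FE s t | FLt s t => term_wf k s && term_wf k t
  | FNot g => formula_wf k g
  | FAnd g h | FOr g h => formula_wf k g && formula_wf k h
  | FEx g | FAll g => formula_wf k.+1 g
  end.

Definition sentence (f : formula) : bool := formula_wf 0 f.

Definition scons (V : Type) (v : V) (env : nat -> V) : nat -> V :=
  fun n => match n with 0 => v | n.+1 => env n end.

Section Eval.
Variables (V : finType) (E : rel V) (c : 'I_6 -> V) (lt : rel V).

Definition eval_term (env : nat -> V) (t : term) : V :=
  match t with TVar n => env n | TConst i => c i end.

Fixpoint eval (env : nat -> V) (f : formula) : Prop :=
  match f with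
  | FEq s t => eval_term env s = eval_term env t
  | FE s t => E (eval_term env s) (eval_term env t)
  | FLt s t => lt (eval_term env s) (eval_term env t)
  | FNot g => ~ eval env g
  | FAnd g h => eval env g /\ eval env h
  | FOr g h => eval env g \/ eval env h
  | FEx g => exists v, eval (scons v env) g
  | FAll g => forall v, eval (scons v env) g
  end.
End Eval.

(* truth of a sentence in (V,E,c,<): the environment is irrelevant for
   sentences; we use the constant environment at the first constant *)
Definition sat6 (V : finType) (E : rel V) (c : 'I_6 -> V) (lt : rel V)
  (f : formula) : Prop :=
  eval E c lt (fun _ => c ord0) f.

Definition Bsat (V : finType) (E : rel V) (c : 'I_6 -> V) (f : formula) : Prop :=
  exists lt : rel V, BFT E lt /\ sat6 E c lt f.

(* In a breadth-first traversal every connected component is an interval of the order starting at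
   a root, a vertex with no earlier neighbour; so "x1, y1, z1 are connected" is first-order in <.
   Inside a component the traversal is sorted by the distance from its root.  The root lies in one
   copy of G, whose x precedes the x of the other copy, and every path into the other copy crosses
   the bridge x1 x2, so there the distances from the root are d(x, -) shifted by a constant.  Two
   vertices at the same distance d + 1 from the root each have a neighbour at distance d, which
   precedes the other vertex; if the distances differ by at least 2, no neighbour of the farther
   vertex precedes the nearer one.  Hence psi says: x1, y1, z1 are connected and, in the copy whose
   x comes later, each of y, z has a neighbour preceding the other.  As G'_3 excludes distances
   differing by exactly 1, the truth of psi is a property of G alone, which gives invariance. *)

From mathcomp Require Import all_boot zify.
From Stdlib Require Import Classical Lia.
Set Implicit Arguments.
Unset Strict Implicit.
Unset Printing Implicit Defensive.

Section StrictOrder.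
Variables (W : finType) (lt : rel W).
Hypotheses (irr_lt : irreflexive lt) (trans_lt : transitive lt).

Lemma lt_ind (P : W -> Prop) :
  (forall v, (forall u, lt u v -> P u) -> P v) -> forall v, P v.
Proof.
move=> IH; suff: forall n v, #|[pred u | lt u v]| < n -> P v.
  by move=> H v; exact: H _ v (ltnSn _).
elim=> // n IHn v rank_v; apply: IH => u uv; apply: IHn.
apply: leq_trans (proper_card _) _; last by rewrite -ltnS; exact: rank_v.
apply/properP; split; last by exists u; rewrite !inE ?irr_lt.
by apply/subsetP => t; rewrite !inE => tu; exact: trans_lt tu uv.
Qed.

Lemma ex_minimal (P : W -> Prop) a :
  P a -> exists2 m, P m & forall u, P u -> ~~ lt u m.
Proof.
move=> Pa; apply: NNPP => no_min; elim/lt_ind: a Pa => v IH Pv.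
by apply: no_min; exists v => // u Pu; apply/negP => uv; exact: IH uv Pu.
Qed.
End StrictOrder.

Section StrictLinearOrder.
Variables (W : finType) (lt : rel W).
Hypothesis lt_lin : strict_linear lt.

Lemma ltxx a : lt a a = false.
Proof. by case: lt_lin => irr _; rewrite irr. Qed.

Lemma lt_trans b a c : lt a b -> lt b c -> lt a c.
Proof. by case: lt_lin => _ [tr _]; exact: tr. Qed.

Lemma lt_asym a b : lt a b -> ~~ lt b a.
Proof. by move=> ab; apply/negP => ba; move: (ltxx a); rewrite (lt_trans ab ba). Qed.

Lemma lt_total a b : a <> b -> lt a b \/ lt b a.
Proof. by case: lt_lin => _ [_ tot] /eqP /tot /orP. Qed.

Lemma nlt_ltVeq a b : ~~ lt a b -> lt b a \/ b = a.
Proof.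
move=> nab; have [<-|ne] := eqVneq b a; first by right.
by case: (lt_total (elimN eqP ne)) => [ba|ab]; [left | rewrite ab in nab].
Qed.

Lemma le_nlt a b : (lt a b \/ a = b) <-> ~~ lt b a.
Proof.
split=> [[ab|->]|/nlt_ltVeq]; [exact: lt_asym | by rewrite ltxx | by []].
Qed.

Lemma ex_minimal_lt (P : W -> Prop) a :
  P a -> exists2 m, P m & forall u, P u -> ~~ lt u m.
Proof. by case: lt_lin => irr [tr _]; exact: ex_minimal. Qed.

Lemma ex_maximal_lt (P : W -> Prop) a :
  P a -> exists2 m, P m & forall u, P u -> ~~ lt m u.
Proof.
case: lt_lin => irr [tr _]; apply: (@ex_minimal _ (fun u v => lt v u)) => //.
by move=> b a' c ba cb; exact: tr cb ba.
Qed.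
End StrictLinearOrder.

Lemma ex_min_nat (P : nat -> Prop) n :
  P n -> exists2 m, P m & forall k, P k -> m <= k.
Proof.
elim/ltn_ind: n => n IH Pn.
have [[k Pk kn]|no_smaller] := classic (exists2 k, P k & k < n); first exact: IH kn Pk.
by exists n => // k Pk; rewrite leqNgt; apply/negP => kn; apply: no_smaller; exists k.
Qed.

Section Walks.
Variables (W : finType) (F : rel W).

Lemma walk0 u v : walk F u v 0 <-> u = v.
Proof. by split=> [[[|? ?] [//= _ []]]|->]; last exists [::]. Qed.

Lemma walk_cons u w v k : F u w -> walk F w v k -> walk F u v k.+1.
Proof. by move=> uw [s [sz [p l]]]; exists (w :: s); rewrite /= sz uw p l. Qed.

Lemma walk_rcons u w v k : walk F u w k -> F w v -> walk F u v k.+1.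
Proof.
move=> [s [sz [p l]]] wv; exists (rcons s v).
by rewrite size_rcons rcons_path last_rcons sz p l wv.
Qed.

Lemma walk_cat u v w a b : walk F u v a -> walk F v w b -> walk F u w (a + b).
Proof.
move=> [s [sz [p l]]] [t [sz' [p' l']]]; exists (s ++ t).
by rewrite size_cat cat_path last_cat sz sz' p l p' l'.
Qed.

Lemma walk_first u v k : walk F u v k.+1 -> exists2 w, F u w & walk F w v k.
Proof.
case=> -[|w s] [//= [sz] [/andP[uw p] l]].
by exists w => //; exists s.
Qed.

Lemma walk_last u v k : walk F u v k.+1 -> exists2 w, walk F u w k & F w v.
Proof.
case=> s [sz [p l]]; move: sz p l; case/lastP: s => [//|s w].
rewrite size_rcons rcons_path last_rcons => -[sz] /andP[p e] <-.
by exists (last u s) => //; exists s.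
Qed.

Lemma walk_connect u v k : walk F u v k -> connect F u v.
Proof. by case=> s [_ [p l]]; apply/connectP; exists s. Qed.

Lemma connect_walk u v : connect F u v -> exists k, walk F u v k.
Proof. by case/connectP=> s p l; exists (size s), s; rewrite l. Qed.

Lemma connect_cross (P : pred W) a b :
  connect F a b -> P a -> ~~ P b -> exists j t, [/\ F j t, P j & ~~ P t].
Proof.
case/connectP=> s; elim: s a => [|c s IH] a /=; first by move=> _ -> ->.
case/andP=> ac p l Pa nPb; case Pc: (P c); first exact: IH p l Pc nPb.
by exists a, c; rewrite Pc.
Qed.

Lemma dist_exists u v : connect F u v -> exists k, is_dist F u v k.
Proof.
by case/connect_walk=> k /ex_min_nat[m wm min_m]; exists m.
Qed.

Lemma dist_unique u v a b : is_dist F u v a -> is_dist F u v b -> a = b.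
Proof. by move=> [wa ma] [wb mb]; apply/eqP; rewrite eqn_leq ma // mb. Qed.

Lemma dist_self r : is_dist F r r 0.
Proof. by split=> //; apply/walk0. Qed.

Lemma dist0 r v : is_dist F r v 0 -> v = r.
Proof. by case=> /walk0. Qed.

Lemma dist_connect r v k : is_dist F r v k -> connect F r v.
Proof. by case=> /walk_connect. Qed.

Lemma dist_edge r a b i j : is_dist F r a i -> F a b -> is_dist F r b j -> j <= i.+1.
Proof. by move=> [wa _] ab [_ min_b]; apply: min_b; exact: walk_rcons wa ab. Qed.

Lemma dist_pred r v k : is_dist F r v k.+1 -> exists2 w, F w v & is_dist F r w k.
Proof.
case=> /walk_last[w wk wv] min_v; exists w => //; split=> // m wm.
by rewrite -ltnS; apply: min_v; exact: walk_rcons wm wv.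
Qed.
End Walks.

Section BreadthFirstTraversal.
Variables (W : finType) (F : rel W) (lt : rel W).
Hypotheses (F_sym : symmetric F) (bft : BFT F lt).
Let lt_lin : strict_linear lt := bft.1.

Definition bft_parent p v :=
  [/\ lt p v, F p v & forall j, lt j v -> has_out_nbr F lt j v -> ~~ lt j p].

Definition bft_root w := ~ exists p, F p w /\ lt p w.

Definition bft_same_comp a b := ~ exists w, bft_root w /\
  ((lt a w /\ (lt w b \/ w = b)) \/ (lt b w /\ (lt w a \/ w = a))).

Definition early_nbrs u v := (exists p, F p u /\ lt p v) /\ (exists q, F q v /\ lt q u).

Lemma bft_parent_exists j v : lt j v -> has_out_nbr F lt j v -> exists p, bft_parent p v.
Proof.
move=> jv j_out.
have [m [mv m_out] min_m] :=
  ex_minimal_lt lt_lin (P := fun j => lt j v /\ has_out_nbr F lt j v) (conj jv j_out).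
exists m; split=> // [|i iv i_out]; last exact: min_m.
apply: (bft.2 _ _ mv m_out) => i im i_out.
by move: (min_m i (conj (lt_trans lt_lin im mv) i_out)); rewrite im.
Qed.

Lemma parent_least p v q : bft_parent p v -> F q v -> ~~ lt q p.
Proof.
case=> pv _ least qv; apply/negP => qp.
have q_out : has_out_nbr F lt q v by exists v; rewrite ltxx.
by move: (least q (lt_trans lt_lin qp pv) q_out); rewrite qp.
Qed.

Lemma parent_mono pa a pb b : bft_parent pa a -> bft_parent pb b -> lt a b -> ~~ lt pb pa.
Proof.
case=> paa _ least [_ pbb _] ab; apply/negP => pbpa.
have pb_out : has_out_nbr F lt pb a by exists b; rewrite pbb (lt_asym lt_lin ab).
by move: (least pb (lt_trans lt_lin pbpa paa) pb_out); rewrite pbpa.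
Qed.

(* An edge leaving the set of vertices before [w] makes [w] adjacent to the earliest vertex
   of that set having a neighbour outside it. *)
Lemma parent_of_connect a b w :
  lt a w -> ~~ lt b w -> connect F a b -> exists p, bft_parent p w.
Proof.
move=> aw bw /(connect_cross (P := lt^~ w))/(_ aw bw) [j [t [jt jw tw]]].
exact: bft_parent_exists jw (ex_intro _ t (conj jt tw)).
Qed.

Lemma root_cut w a b : bft_root w -> lt a w -> ~~ lt b w -> ~ connect F a b.
Proof.
by move=> root_w aw bw /(parent_of_connect aw bw) [p [pw Fpw _]]; apply: root_w; exists p.
Qed.

Lemma connect_from_root w v : bft_root w -> ~~ lt v w ->
  (forall u, bft_root u -> lt w u -> ~~ lt v u -> False) -> connect F w v.
Proof.
have [irr [tr _]] := lt_lin; move=> root_w; elim/(lt_ind irr tr): v => v IH vw no_root.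
have [wv|<-] := nlt_ltVeq lt_lin vw; last exact: connect0.
have [p [Fpv pv]] : exists p, F p v /\ lt p v.
  by apply: NNPP => root_v; exact: no_root root_v wv (negbT (ltxx lt_lin v)).
apply: connect_trans (connect1 Fpv); apply: (IH _ pv).
  by apply/negP => pw; exact: root_cut root_w pw vw (connect1 Fpv).
move=> u root_u wu pu; apply: no_root root_u wu _.
by apply: contra pu; apply: (lt_trans lt_lin pv).
Qed.

(* Components are intervals of the traversal, each starting at a root. *)
Lemma bft_same_compP a b : bft_same_comp a b <-> connect F a b.
Proof.
have connectC := sym_connect_sym F_sym.
split=> [same|ab [w [root_w [[aw wb]|[bw wa]]]]]; last first.
- by apply: root_cut root_w bw ((le_nlt lt_lin _ _).1 wa) _; rewrite connectC.
- exact: root_cut root_w aw ((le_nlt lt_lin _ _).1 wb) ab.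
have [g _ g_min] := ex_minimal_lt lt_lin (P := fun _ => True) (a := a) I.
have root_g : bft_root g by case=> p [_ pg]; move: (g_min p I); rewrite pg.
have [m [root_m am] m_max] :=
  ex_maximal_lt lt_lin (P := fun u => bft_root u /\ ~~ lt a u) (conj root_g (g_min a I)).
have ma : connect F m a.
  apply: (connect_from_root root_m am) => u root_u mu au.
  by move: (m_max u (conj root_u au)); rewrite mu.
have mb : connect F m b.
  apply: (connect_from_root root_m) => [|u root_u mu bu].
    apply/negP => bm; apply: same; exists m; split; first exact: root_m.
    by right; split=> //; apply/(le_nlt lt_lin).
  case au: (lt a u); last by move: (m_max u (conj root_u (negbT au))); rewrite mu.
  apply: same; exists u; split; first exact: root_u.
  by left; split=> //; apply/(le_nlt lt_lin).
by apply: connect_trans mb; rewrite connectC.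
Qed.

Section FromRoot.
Variable r : W.
Hypothesis r_min : forall t, connect F r t -> ~~ lt t r.

Lemma lt_root v : connect F r v -> v <> r -> lt r v.
Proof. by move=> rv vr; case: (nlt_ltVeq lt_lin (r_min rv)) => // /esym /vr. Qed.

Lemma dist_succ_neq v k : is_dist F r v k.+1 -> v <> r.
Proof. by move=> Dv vr; move: Dv; rewrite vr => /(dist_unique (dist_self F r)). Qed.

Lemma parent_of_dist_succ v k : is_dist F r v k.+1 -> exists p, bft_parent p v.
Proof.
move=> Dv; have rv := dist_connect Dv.
by apply: parent_of_connect (lt_root rv (dist_succ_neq Dv)) _ rv; rewrite ltxx.
Qed.

Lemma dist_nbr p v k : is_dist F r v k -> F p v -> exists2 j, is_dist F r p j & k <= j.+1.
Proof.
move=> Dv pv; have rp : connect F r p.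
  by apply: connect_trans (dist_connect Dv) (connect1 _); rewrite F_sym.
by have [j Dp] := dist_exists rp; exists j => //; exact: dist_edge Dp pv Dv.
Qed.

Lemma bft_dist_mono u v du dv :
  is_dist F r u du -> is_dist F r v dv -> du < dv -> lt u v.
Proof.
elim: du u v dv => [|k IH] u v [|dv] Du Dv //; rewrite ?ltnS => kdv.
  by rewrite (dist0 Du); apply: lt_root (dist_connect Dv) (dist_succ_neq Dv).
case luv: (lt u v) => //; have [vu|vu] := nlt_ltVeq lt_lin (negbT luv); last first.
  by move: Dv; rewrite vu => /(dist_unique Du) [] kdv_eq; rewrite kdv_eq ltnn in kdv.
have [pu Pu] := parent_of_dist_succ Du; have [pv Pv] := parent_of_dist_succ Dv.
have [w wu Dw] := dist_pred Du.
have [[_ Fpu _] [_ Fpv _]] := (Pu, Pv).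
have [j Dpu kj] := dist_nbr Du Fpu; have [i Dpv dvi] := dist_nbr Dv Fpv.
have jk : j <= k.
  by rewrite leqNgt; apply/negP => /(IH _ _ _ Dw Dpu); apply/negP/(parent_least Pu wu).
have j_eq : j = k by apply/eqP; rewrite eqn_leq jk.
rewrite {}j_eq in Dpu.
have pupv : lt pu pv by apply: IH Dpu Dpv _; exact: leq_trans kdv dvi.
by move: (parent_mono Pv Pu vu); rewrite pupv.
Qed.

Lemma early_nbrs_dist_eq u v d : is_dist F r u d.+1 -> is_dist F r v d.+1 -> early_nbrs u v.
Proof.
move=> Du Dv; have [p pu Dp] := dist_pred Du; have [q qv Dq] := dist_pred Dv.
by split; [exists p | exists q]; split=> //; apply: bft_dist_mono (ltnSn d).
Qed.

Lemma early_nbrs_dist_gap u v du dv :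
  is_dist F r u du -> is_dist F r v dv -> du.+2 <= dv -> ~ early_nbrs u v.
Proof.
move=> Du Dv gap [_ [q [qv qu]]]; have [j Dq dvj] := dist_nbr Dv qv.
have uq : lt u q by apply: bft_dist_mono Du Dq _; rewrite -ltnS (leq_trans gap dvj).
by move: (lt_asym lt_lin uq); rewrite qu.
Qed.
End FromRoot.
End BreadthFirstTraversal.

Section Doubling.
Variables (V : finType) (E : rel V) (x : V).
Local Notation T := (tauE E x).

Definition copy (b : bool) (a : V) : V + V := if b then inl a else inr a.

Definition uncopy (t : V + V) : V := match t with inl a | inr a => a end.

Lemma tauE_sym : symmetric E -> symmetric T.
Proof. by move=> E_sym [] a [] b //=; rewrite andbC. Qed.

Lemma tauE_copy b a c : T (copy b a) (copy b c) = E a c.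
Proof. by case: b. Qed.

Lemma tauE_bridge b a c : T (copy b a) (copy (~~ b) c) = (a == x) && (c == x).
Proof. by case: b. Qed.

Lemma copyP t : exists b a, t = copy b a.
Proof. by case: t => a; [exists true | exists false]; exists a. Qed.

Lemma uncopyK b a : uncopy (copy b a) = a.
Proof. by case: b. Qed.

Lemma walk_copy b a c k : walk E a c k -> walk T (copy b a) (copy b c) k.
Proof.
elim: k a => [|k IH] a; first by move/walk0 => ->; apply/walk0.
by case/walk_first=> w aw wc; apply: walk_cons (IH _ wc); rewrite tauE_copy.
Qed.

Lemma walk_uncopy t u k :
  walk T t u k -> exists2 k', k' <= k & walk E (uncopy t) (uncopy u) k'.
Proof.
elim: k t => [|k IH] t; first by move/walk0 => ->; exists 0 => //; apply/walk0.
case/walk_first=> w tw /IH[k' k'k wu].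
have [b [a et]] := copyP t; have [c [d ew]] := copyP w; subst t w.
rewrite !uncopyK in wu *; have [cb|cb] := eqVneq c b.
  by subst c; exists k'.+1 => //; apply: walk_cons _ wu; rewrite -(tauE_copy b).
move: tw; rewrite (_ : c = ~~ b); last by case: b c cb {wu} => [] [].
by rewrite tauE_bridge => /andP[/eqP -> /eqP <-]; exists k' => //; exact: leqW.
Qed.

Lemma connect_uncopy t u : connect T t u -> connect E (uncopy t) (uncopy u).
Proof. by case/connect_walk=> k /walk_uncopy[k' _ /walk_connect]. Qed.

Lemma connect_copy_x c a : connect E x a -> connect T (inl x) (copy c a).
Proof.
case/connect_walk=> k /(walk_copy c)/walk_connect; case: c => //.
by apply: connect_trans (connect1 _); rewrite /= !eqxx.
Qed.

Lemma walk_bridge b u a m : walk T (copy b u) (copy (~~ b) a) m ->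
  exists m1 m2, [/\ m = m1 + m2.+1, walk T (copy b u) (copy b x) m1
                  & walk T (copy (~~ b) x) (copy (~~ b) a) m2].
Proof.
elim: m u => [|m IH] u; first by case: b => /walk0.
case/walk_first=> w uw wa; have [c [d ew]] := copyP w; subst w.
have [cb|/negPf cb] := eqVneq c b.
  subst c; have [m1 [m2 [-> w1 w2]]] := IH d wa.
  by exists m1.+1, m2; split=> //; exact: walk_cons uw w1.
move: uw wa; rewrite (_ : c = ~~ b); last by case: b c cb {IH} => [] [].
rewrite tauE_bridge => /andP[/eqP -> /eqP ->] wa.
by exists 0, m; split=> //; apply/walk0.
Qed.

Lemma dist_other_copy b r a D k : is_dist T (copy b r) (copy b x) D ->
  is_dist E x a k -> is_dist T (copy b r) (copy (~~ b) a) (D + k.+1).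
Proof.
move=> [wD minD] [wk mink]; split.
  by apply: walk_cat wD (walk_cons _ (walk_copy _ wk)); rewrite tauE_bridge !eqxx.
move=> m /walk_bridge[m1 [m2 [-> w1 /walk_uncopy[m2' m2'm2]]]].
rewrite !uncopyK => /mink km2'; have := minD _ w1; lia.
Qed.
End Doubling.

Definition X1 := TConst (@Ordinal 6 0 isT).
Definition Y1 := TConst (@Ordinal 6 1 isT).
Definition Z1 := TConst (@Ordinal 6 2 isT).
Definition X2 := TConst (@Ordinal 6 3 isT).
Definition Y2 := TConst (@Ordinal 6 4 isT).
Definition Z2 := TConst (@Ordinal 6 5 isT).

(* The arguments [a b u v] must be closed terms: they are used under binders without shifting. *)
Definition FRoot := FNot (FEx (FAnd (FE (TVar 0) (TVar 1)) (FLt (TVar 0) (TVar 1)))).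
Definition FLe a b := FOr (FLt a b) (FEq a b).
Definition FSameComp a b := FNot (FEx (FAnd FRoot
  (FOr (FAnd (FLt a (TVar 0)) (FLe (TVar 0) b)) (FAnd (FLt b (TVar 0)) (FLe (TVar 0) a))))).
Definition FEarlyNbrs u v := FAnd (FEx (FAnd (FE (TVar 0) u) (FLt (TVar 0) v)))
                            (FEx (FAnd (FE (TVar 0) v) (FLt (TVar 0) u))).
Definition FImp a b := FOr (FNot a) b.

Definition psi := FAnd (FSameComp X1 Y1) (FAnd (FSameComp X1 Z1)
  (FAnd (FImp (FLt X1 X2) (FEarlyNbrs Y2 Z2)) (FImp (FLt X2 X1) (FEarlyNbrs Y1 Z1)))).

Lemma psi_sentence : sentence psi.
Proof. by []. Qed.

Lemma eval_psi_tau (V : finType) (E : rel V) (x y z : V) lt env :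
  let T := tauE E x in
  eval T (tauC x y z) lt env psi <->
  bft_same_comp T lt (inl x) (inl y) /\ bft_same_comp T lt (inl x) (inl z) /\
  (lt (inl x) (inr x) -> early_nbrs T lt (inr y) (inr z)) /\
  (lt (inr x) (inl x) -> early_nbrs T lt (inl y) (inl z)).
Proof.
split=> -[s1 [s2 [i1 i2]]].
  exact (conj s1 (conj s2 (conj (or_to_imply _ _ i1) (or_to_imply _ _ i2)))).
exact (conj s1 (conj s2 (conj (imply_to_or _ _ i1) (imply_to_or _ _ i2)))).
Qed.

Section TraversalOfDoubling.
Variables (V : finType) (E : rel V) (x y z : V) (lt : rel (V + V)).
Hypotheses (E_sym : symmetric E) (bft : BFT (tauE E x) lt).
Local Notation T := (tauE E x).
Let T_sym : symmetric T := tauE_sym x E_sym.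
Let lt_lin : strict_linear lt := bft.1.

Lemma tau_component_root : exists b r,
  (forall t, connect T (copy b r) t -> ~~ lt t (copy b r)) /\ connect T (copy b r) (copy b x).
Proof.
have [r xr r_min] :=
  ex_minimal_lt lt_lin (P := fun t => connect T (inl x) t) (connect0 T (inl x)).
have [b [r0 er]] := copyP r; subst r; exists b, r0; split.
  by move=> t rt; apply/r_min/(connect_trans xr rt).
rewrite (sym_connect_sym T_sym) in xr.
exact: connect_trans xr (connect_copy_x _ (connect0 E x)).
Qed.

Lemma far_copy_early_nbrs : inG3' E x y z -> connect E x y -> connect E x z ->
  exists b, lt (copy b x) (copy (~~ b) x) /\
    (early_nbrs T lt (copy (~~ b) y) (copy (~~ b) z) <-> dist_eq E x y z).
Proof.
move=> hG xy xz; have [b [r [r_min rx]]] := tau_component_root; exists b.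
have [D Dx] := dist_exists rx.
have [[ky Dy] [kz Dz]] := (dist_exists xy, dist_exists xz).
have Dy' := dist_other_copy Dx Dy; have Dz' := dist_other_copy Dx Dz.
split.
  apply: (bft_dist_mono T_sym bft r_min Dx (dist_other_copy Dx (dist_self E x))).
  by rewrite addn1.
have -> : dist_eq E x y z <-> ky = kz.
  split=> [[k [Dy1 Dz1]]|ky_eq]; last by exists ky; split=> //; rewrite ky_eq.
  by rewrite (dist_unique Dy Dy1) (dist_unique Dz Dz1).
split=> [early|ky_eq]; last by rewrite -ky_eq !addnS in Dy' Dz'; exact: early_nbrs_dist_eq Dy' Dz'.
have [ky_kz kz_ky] := hG (conj xy xz) _ _ Dy Dz.
case: (ltngtP ky kz) => // [ltyz|ltzy]; exfalso.
  by apply: (early_nbrs_dist_gap T_sym bft r_min Dy' Dz' _ early); lia.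
case: early => early1 early2.
by apply: (early_nbrs_dist_gap T_sym bft r_min Dz' Dy' _ (conj early2 early1)); lia.
Qed.

Lemma sat_psi_tau : inG3' E x y z ->
  sat6 T (tauC x y z) lt psi <-> same_comp3 E x y z /\ dist_eq E x y z.
Proof.
move=> hG; rewrite /sat6 eval_psi_tau !(bft_same_compP T_sym bft).
have [[xy xz]|not_comp] := classic (same_comp3 E x y z); last first.
  split=> [[Txy [Txz _]]|[]//]; case: not_comp.
  by split; [exact: connect_uncopy Txy | exact: connect_uncopy Txz].
have Txy : connect T (inl x) (inl y) := connect_copy_x true xy.
have Txz : connect T (inl x) (inl z) := connect_copy_x true xz.
have comp : same_comp3 E x y z := conj xy xz.
have [b [xb early_iff]] := far_copy_early_nbrs hG xy xz; rewrite -early_iff.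
have xo := lt_asym lt_lin xb; case: b {early_iff} xb xo => /= xb xo.
  split=> [[_ [_ [/(_ xb) early _]]]|[_ early]]; first by split.
  by do 2!split=> //; split=> [_|x_lt] //; rewrite x_lt in xo.
split=> [[_ [_ [_ /(_ xb) early]]]|[_ early]]; first by split.
by do 2!split=> //; split=> [x_lt|_] //; rewrite x_lt in xo.
Qed.
End TraversalOfDoubling.

Lemma find_eq_index (T : eqType) (a : pred T) (s : seq T) x :
  uniq s -> x \in s -> a x -> (forall y, y \in s -> index y s < index x s -> ~~ a y) ->
  find a s = index x s.
Proof.
move=> s_uniq xs ax x_first; apply/eqP; rewrite eqn_leq; apply/andP; split.
  by rewrite leqNgt; apply/negP => /(before_find x); rewrite nth_index ?ax.
rewrite leqNgt; apply/negP => find_lt.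
have found : find a s < size s by rewrite -has_find; apply/hasP; exists x.
move: (x_first _ (mem_nth x found)); rewrite index_uniq // find_lt => /(_ isT).
by rewrite nth_find // has_find.
Qed.

Section BreadthFirstSearch.
Variables (W : finType) (F : rel W) (w0 : W).

Definition has_out (p : seq W) j := [exists t, F j t && (t \notin p)].

Definition bfs_next (p : seq W) : W :=
  let j := nth w0 p (find (has_out p) p) in
  odflt (odflt w0 [pick v | v \notin p]) [pick v | F j v && (v \notin p)].

Definition bfs_prefix n := iter n (fun p => rcons p (bfs_next p)) [::].

Definition bfs_seq := bfs_prefix #|W|.

Definition bfs_lt : rel W := fun a b => index a bfs_seq < index b bfs_seq.

Lemma size_bfs_prefix n : size (bfs_prefix n) = n.
Proof. by elim: n => //= n IH; rewrite size_rcons IH. Qed.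

Lemma bfs_next_notin p : uniq p -> size p < #|W| -> bfs_next p \notin p.
Proof.
move=> p_uniq p_small; rewrite /bfs_next.
case: pickP => [u u_out|all_in]; case: pickP => [v /andP[_ v_out]|_] //=.
have : #|W| <= size p.
  rewrite -(card_uniqP p_uniq); apply: subset_leq_card; apply/subsetP => v _.
  exact: negbFE (all_in v).
by rewrite leqNgt p_small.
Qed.

Lemma uniq_bfs_prefix n : n <= #|W| -> uniq (bfs_prefix n).
Proof.
elim: n => // n IH n_small; rewrite /= rcons_uniq IH ?andbT ?(ltnW n_small) //.
by apply: bfs_next_notin (IH (ltnW n_small)) _; rewrite size_bfs_prefix.
Qed.

Lemma take_bfs_prefix n i : i <= n -> take i (bfs_prefix n) = bfs_prefix i.
Proof.
elim: n => [|n IH]; first by rewrite leqn0 => /eqP ->.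
rewrite leq_eqVlt => /orP[/eqP ->|i_le]; first by rewrite take_oversize ?size_bfs_prefix.
by rewrite /= -cats1 takel_cat ?size_bfs_prefix // IH.
Qed.

Lemma uniq_bfs_seq : uniq bfs_seq.
Proof. exact: uniq_bfs_prefix. Qed.

Lemma mem_bfs_seq v : v \in bfs_seq.
Proof.
have /subset_cardP eq_all : #|bfs_seq| = #|predT : pred W|.
  by rewrite (card_uniqP uniq_bfs_seq) size_bfs_prefix.
by rewrite (eq_all (subset_predT _)).
Qed.

Lemma index_bfs_seq v : index v bfs_seq < #|W|.
Proof. by rewrite -[X in _ < X](size_bfs_prefix #|W|) index_mem mem_bfs_seq. Qed.

Lemma bfs_seq_take v : take (index v bfs_seq) bfs_seq = bfs_prefix (index v bfs_seq).
Proof. by rewrite take_bfs_prefix // ltnW ?index_bfs_seq. Qed.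

Lemma bfs_seq_next v : v = bfs_next (bfs_prefix (index v bfs_seq)).
Proof.
rewrite -{1}(nth_index w0 (mem_bfs_seq v)) -(nth_take w0 (ltnSn _)) take_bfs_prefix.
  by rewrite /= nth_rcons size_bfs_prefix ltnn eqxx.
exact: index_bfs_seq.
Qed.

Lemma bfs_lt_linear : strict_linear bfs_lt.
Proof.
split; first by move=> a; rewrite /bfs_lt ltnn.
split; first by move=> b a c; exact: ltn_trans.
move=> a b; rewrite /bfs_lt -neq_ltn; apply: contra => /eqP idx_eq.
by rewrite -(nth_index w0 (mem_bfs_seq a)) idx_eq nth_index ?mem_bfs_seq.
Qed.

Lemma mem_bfs_prefix v u : (u \in bfs_prefix (index v bfs_seq)) = bfs_lt u v.
Proof. by rewrite -bfs_seq_take in_take ?mem_bfs_seq. Qed.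

Lemma index_bfs_prefix v u : u \in bfs_prefix (index v bfs_seq) ->
  index u (bfs_prefix (index v bfs_seq)) = index u bfs_seq.
Proof.
move=> u_p; rewrite -[in RHS](cat_take_drop (index v bfs_seq) bfs_seq).
by rewrite index_cat bfs_seq_take u_p.
Qed.

Lemma bfs_lt_BFT : BFT F bfs_lt.
Proof.
split=> [|v js js_v [t [js_t t_out]] js_first]; first exact: bfs_lt_linear.
set p := bfs_prefix (index v bfs_seq).
have p_uniq : uniq p by apply: uniq_bfs_prefix; exact: ltnW (index_bfs_seq v).
have js_p : js \in p by rewrite mem_bfs_prefix.
have js_out : has_out p js by apply/existsP; exists t; rewrite js_t mem_bfs_prefix.
have find_js : find (has_out p) p = index js p.
  apply: (find_eq_index p_uniq js_p js_out) => u u_p u_first.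
  apply/existsP => -[t' /andP[u_t' t'_out]]; apply: (js_first u).
    by rewrite /bfs_lt -(index_bfs_prefix u_p) -(index_bfs_prefix js_p).
  by exists t'; rewrite u_t' -mem_bfs_prefix.
have := bfs_seq_next v; rewrite -/p /bfs_next find_js nth_index //.
case: (pickP (fun u => F js u && (u \notin p))) => [u /andP[js_u _] -> //|no_nbr].
by move: (no_nbr t); rewrite js_t mem_bfs_prefix t_out.
Qed.
End BreadthFirstSearch.

Section Isomorphism.
Variables (W1 W2 : finType) (F1 : rel W1) (F2 : rel W2).
Variables (c1 : 'I_6 -> W1) (c2 : 'I_6 -> W2) (f : W1 -> W2) (g : W2 -> W1).
Hypotheses (fK : cancel f g) (gK : cancel g f).
Hypotheses (f_edge : forall a b, F2 (f a) (f b) = F1 a b) (f_const : forall i, f (c1 i) = c2 i).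
Variable lt2 : rel W2.

Definition comap_lt : rel W1 := fun a b => lt2 (f a) (f b).

Lemma BFT_comap : BFT F2 lt2 -> BFT F1 comap_lt.
Proof.
case=> -[irr [tr tot]] bft2; split.
  split; first by move=> a; exact: irr.
  split; first by move=> b a c; exact: tr.
  by move=> a b ab; apply: tot; apply: contra ab => /eqP/(can_inj fK)->.
move=> v j jv [t [jt tv]] j_first; rewrite -f_edge; apply: bft2 jv _ _.
  by exists (f t); rewrite f_edge.
move=> i ij [t' [it' t'v]]; apply: (j_first (g i)); first by rewrite /comap_lt gK.
by exists (g t'); rewrite -f_edge /comap_lt !gK.
Qed.

Lemma eval_comap phi env1 env2 : (forall n, f (env1 n) = env2 n) ->
  eval F1 c1 comap_lt env1 phi <-> eval F2 c2 lt2 env2 phi.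
Proof.
have f_term e1 e2 t : (forall n, f (e1 n) = e2 n) ->
    f (eval_term c1 e1 t) = eval_term c2 e2 t.
  by move=> fe; case: t => [n|i] /=; [exact: fe | exact: f_const].
have f_scons e1 e2 v : (forall n, f (e1 n) = e2 n) ->
    forall n, f (scons v e1 n) = scons (f v) e2 n.
  by move=> fe [].
elim: phi env1 env2 => [s t|s t|s t|p IH|p IHp q IHq|p IHp q IHq|p IH|p IH] env1 env2 fe /=;
  rewrite -?(f_term _ _ s fe) -?(f_term _ _ t fe).
- by split=> [->|/(can_inj fK)].
- by rewrite f_edge.
- by [].
- by rewrite (IH _ _ fe).
- by rewrite (IHp _ _ fe) (IHq _ _ fe).
- by rewrite (IHp _ _ fe) (IHq _ _ fe).
- split=> [[v /(IH _ _ (f_scons _ _ v fe))]|[v]]; first by exists (f v).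
  by rewrite -{1}[v]gK => /(IH _ _ (f_scons _ _ (g v) fe)); exists (g v).
- split=> all_v v; last exact/(IH _ _ (f_scons _ _ v fe)).
  by rewrite -[v]gK; apply/(IH _ _ (f_scons _ _ (g v) fe)).
Qed.
End Isomorphism.

Theorem theorem1 :
  exists psi : formula,
    sentence psi /\
    (* (G'_6, B)-invariance *)
    (forall (V1 : finType) (E1 : rel V1) (x1 y1 z1 : V1)
            (V2 : finType) (E2 : rel V2) (x2 y2 z2 : V2),
        symmetric E1 -> irreflexive E1 -> inG3' E1 x1 y1 z1 ->
        symmetric E2 -> irreflexive E2 -> inG3' E2 x2 y2 z2 ->
        iso6 (tauE E1 x1) (tauC x1 y1 z1) (tauE E2 x2) (tauC x2 y2 z2) ->
        forall (lt1 : rel (V1 + V1)%type) (lt2 : rel (V2 + V2)%type),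
          BFT (tauE E1 x1) lt1 -> BFT (tauE E2 x2) lt2 ->
          (sat6 (tauE E1 x1) (tauC x1 y1 z1) lt1 psi <->
           sat6 (tauE E2 x2) (tauC x2 y2 z2) lt2 psi)) /\
    (forall (V : finType) (E : rel V) (x y z : V),
        symmetric E -> irreflexive E -> inG3' E x y z ->
        ((same_comp3 E x y z /\ dist_eq E x y z) ->
           Bsat (tauE E x) (tauC x y z) psi) /\
        ((~ same_comp3 E x y z \/ dist_gap2 E x y z) ->
           ~ Bsat (tauE E x) (tauC x y z) psi)).
Proof.
exists psi; split; first exact: psi_sentence.
split=> [V1 E1 x1 y1 z1 V2 E2 x2 y2 z2 E1_sym _ hG1 _ _ _ iso lt1 lt2 bft1 bft2|].
  case: iso => f [[g fK gK] [f_edge f_const]].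
  have bft2' := BFT_comap fK gK f_edge bft2.
  rewrite (sat_psi_tau E1_sym bft1 hG1) -(sat_psi_tau E1_sym bft2' hG1).
  exact: eval_comap.
move=> V E x y z E_sym _ hG; split=> [comp_eq|not_comp_eq [lt [bft sat]]].
  have bft := bfs_lt_BFT (tauE E x) (inl x).
  by exists (bfs_lt (tauE E x) (inl x)); split; last exact/(sat_psi_tau E_sym bft hG).
have [comp [k [Dy Dz]]] := (sat_psi_tau E_sym bft hG).1 sat.
case: not_comp_eq => [//|[ky [kz [Dy' [Dz' gap]]]]].
by rewrite (dist_unique Dy' Dy) (dist_unique Dz' Dz) in gap; lia.
Qed.
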